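(* Let $\varphi:\mathbb R\to\mathbb R$ be concave. Assume only upper-bound group constraints (with $\mathcal S\neq\emptyset$) and let $F$ be a maxmin-fair distribution over $\mathcal S$ for satisfaction $A=V$. Then for every probability distribution $D$ over $\mathcal S$, $$\sum_{u\in\mathcal U}\varphi(F[u])\ \ge\ \sum_{u\in\mathcal U}\varphi(D[u]).$$
   Context: Ranking setting: $\mathcal U=\{u_1,\dots,u_n\}$ finite set of individuals partitioned into groups $C_1,\dots,C_t$; $R:\mathcal U\to\mathbb R$ relevance with distinct values; rankings are bijections $r:\mathcal U\to[n]$. Only upper bounds: $\mathcal S=\{r:\ |\{u\in C_k: r(u)\le i\}|\le u_i^k\ \forall i\in[n],k\in[t]\}$ for given integers $u_i^k$. Value function $V(r,u)=f(r(u))-g(u)$ with $f:[n]\to\mathbb R$ non-increasing and $g:\mathcal U\to\mathbb R$ satisfying $R(u)\ge R(v)\Rightarrow g(u)\ge g(v)$. For a distribution $D$ over $\mathcal S$, $D[u]=\mathbb E_{r\sim D}[V(r,u)]$. $F$ is maxmin-fair if for every distribution $D$ over $\mathcal S$ and every $u$: $D[u]>F[u]$ implies there is $v$ with $D[v]<F[v]\le F[u]$. *)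

From HB Require Import structures.
From mathcomp Require Import all_boot all_order all_algebra.
Set Implicit Arguments. Unset Strict Implicit. Unset Printing Implicit Defensive.
Import Order.TTheory GRing.Theory Num.Theory.
Local Open Scope ring_scope.

(* A ranking of the finite set U of individuals: a map U -> {0,..,n-1},
   n = #|U|; the rank (in [n] = {1..n}) of u is (r u).+1.  Rankings are
   the bijective ones, i.e. the injective ones (injectiveb). *)
Definition ranking (U : finType) := {ffun U -> 'I_#|U|}.

Definition rk (U : finType) (r : ranking U) (u : U) : nat := (nat_of_ord (r u)).+1.

(* Groups C_1..C_t are given by a map grp : U -> 'I_t (a partition). *)
Definition feasible (U : finType) (t : nat) (grp : U -> 'I_t)
  (ub : nat -> 'I_t -> int) (r : ranking U) : bool :=
  injectiveb r &&
  [forall i : 'I_#|U|, forall k : 'I_t,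
     (#|[set u | (grp u == k) && (rk r u <= i.+1)%N]|%:Z <= ub i.+1 k)].

Definition value (R : realFieldType) (U : finType) (f : nat -> R) (g : U -> R)
  (r : ranking U) (u : U) : R := f (rk r u) - g u.

Definition distr_over (R : realFieldType) (U : finType) (S : pred (ranking U))
  (D : {ffun ranking U -> R}) : Prop :=
  (forall r, 0 <= D r) /\ (\sum_(r : ranking U) D r = 1) /\
  (forall r, D r != 0 -> S r).

Definition expv (R : realFieldType) (U : finType) (f : nat -> R) (g : U -> R)
  (D : {ffun ranking U -> R}) (u : U) : R :=
  \sum_(r : ranking U) D r * value f g r u.

Definition maxmin_fair (R : realFieldType) (U : finType) (S : pred (ranking U))
  (f : nat -> R) (g : U -> R) (F : {ffun ranking U -> R}) : Prop :=
  forall D, distr_over S D -> forall u,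
    expv f g F u < expv f g D u ->
    exists v, expv f g D v < expv f g F v /\ expv f g F v <= expv f g F u.

Definition concave (R : realFieldType) (phi : R -> R) : Prop :=
  forall (x y lam : R), 0 <= lam -> lam <= 1 ->
    lam * phi x + (1 - lam) * phi y <= phi (lam * x + (1 - lam) * y).

From HB Require Import structures.
From mathcomp Require Import all_boot all_order all_algebra.
From mathcomp Require Import perm.
From mathcomp Require Import ring lra zify.
Import Order.TTheory GRing.Theory Num.Theory.
Set Implicit Arguments. Unset Strict Implicit. Unset Printing Implicit Defensive.
Local Open Scope ring_scope.

(* Maxmin-fair rankings maximize every concave welfare sum (upper-bound group
   constraints only).  Write x u := F[u] and y u := D[u].

   1. concave_majorization: for concave phi, sum phi(y) <= sum phi(x) as soon
      as sum y = sum x and, on every lower level set {u | x u <= x w}, y sums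
      to at most what x sums to.  The proof linearizes phi with supergradients
      at the finitely many points x u, y u (concave_supergradients, built from
      the decreasing chord slopes) and concludes by Abel summation
      (abel_nonpos).
   2. total_expv: sum_u D[u] is the same for all D, since a bijective ranking
      fills every position exactly once.
   3. lower_set_sum: on a lower level set L of F, no distribution beats F.
      Every ranking r in the support of F maximizes the value collected on L
      (support_optimal): the exchange argument on upper bounds
      (exchange_step, exchange_closure) turns any feasible s into a feasible
      q that dominates s prefix-wise on L (hence collects at least as much,
      dominates_sum) and ranks L no lower than r; if q were strictly better
      than r for someone in L, shifting F's mass from r to q would contradict
      maxmin-fairness. *)

Lemma separating_point (R : realFieldType) (ls us : seq R) :
  {in ls & us, forall a b, a <= b} ->
  exists c, {in ls, forall a, a <= c} /\ {in us, forall b, c <= b}.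
Proof.
elim: ls => [|a ls IH] ls_le_us.
  elim: us {ls_le_us} => [|b us [c [_ c_le]]]; first by exists 0.
  exists (Num.min b c); split=> // b'; rewrite inE ge_min.
  by case/predU1P=> [->|/c_le ->]; rewrite ?lexx ?orbT.
have [a' b a'ls bus|c [ls_le c_le]] := IH; first by rewrite ls_le_us ?inE ?a'ls ?orbT.
exists (Num.max a c); split=> [a'|b bus].
  by rewrite inE le_max => /predU1P [->|/ls_le ->]; rewrite ?lexx ?orbT.
by rewrite ge_max c_le // ls_le_us ?inE ?eqxx.
Qed.

Definition slope (R : realFieldType) (phi : R -> R) (a b : R) : R :=
  (phi b - phi a) / (b - a).

Lemma concave_slope_decr (R : realFieldType) (phi : R -> R) (a b c : R) :
  concave phi -> a < b -> b < c -> slope phi b c <= slope phi a b.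
Proof.
move=> phi_cvx ab bc.
have ca : 0 < c - a by lra.
pose lam := (c - b) / (c - a).
have lam_ge0 : 0 <= lam by rewrite divr_ge0 // ltW // subr_gt0.
have lam_le1 : lam <= 1 by rewrite ler_pdivrMr // mul1r; lra.
have := phi_cvx a c lam lam_ge0 lam_le1.
have -> : lam * a + (1 - lam) * c = b by rewrite /lam; field; lra.
have -> : lam * phi a + (1 - lam) * phi c
          = ((c - b) * phi a + (b - a) * phi c) / (c - a) by rewrite /lam; field; lra.
rewrite ler_pdivrMr // => chord.
rewrite /slope ler_pdivrMr ?subr_gt0 // mulrAC ler_pdivlMr ?subr_gt0 //.
nra.
Qed.

Lemma concave_supergradients (R : realFieldType) (phi : R -> R) (ts : seq R) :
  concave phi ->
  exists C : R -> R,
    (forall a t, t \in ts -> phi t <= phi a + C a * (t - a)) /\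
    {in ts &, forall a b, a <= b -> C b <= C a}.
Proof.
move=> phi_cvx.
pose tangent a c := all (fun t => ((a < t) ==> (slope phi a t <= c)) &&
                                  ((t < a) ==> (c <= slope phi t a))) ts.
have tangent_ex a : exists c, tangent a c.
  have [|c [right_le le_left]] := @separating_point R
      [seq slope phi a t | t <- ts & a < t] [seq slope phi t a | t <- ts & t < a].
    move=> _ _ /mapP [t1 + ->] /mapP [t2 + ->]; rewrite !mem_filter.
    by move=> /andP [at1 _] /andP [t2a _]; apply: concave_slope_decr.
  exists c; apply/allP => t tts; apply/andP; split; apply/implyP => lt.
    by apply: right_le; apply: map_f; rewrite mem_filter lt.
  by apply: le_left; apply: map_f; rewrite mem_filter lt.
pose C a := xchoose (tangent_ex a).
exists C.
have slopes a t : t \in ts ->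
    (a < t -> slope phi a t <= C a) /\ (t < a -> C a <= slope phi t a).
  move=> tts; have /allP/(_ t tts)/andP [/implyP ? /implyP ?] := xchooseP (tangent_ex a).
  by split.
split=> [a t tts | a b ats bts].
  have [ta|a_t|->] := ltgtP t a; last lra.
    have := (slopes a t tts).2 ta.
    by rewrite /slope ler_pdivlMr ?subr_gt0 // => ?; nra.
  have := (slopes a t tts).1 a_t.
  by rewrite /slope ler_pdivrMr ?subr_gt0 // => ?; nra.
rewrite le_eqVlt => /predU1P [->//|ab].
exact: le_trans ((slopes b a ats).2 ab) ((slopes a b bts).1 ab).
Qed.

Lemma abel_nonpos (R : realFieldType) (U : finType) (x c d : U -> R) (A : {set U}) :
  {in A, forall u, 0 <= c u} ->
  {in A &, forall u v, x u <= x v -> c v <= c u} ->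
  {in A, forall w, \sum_(u in A | x u <= x w) d u <= 0} ->
  \sum_(u in A) c u * d u <= 0.
Proof.
elim: {A}_.+1 {-2}A (ltnSn #|A|) c => // n IH A ltAn c c_ge0 c_anti d_lower.
have [->|[w0 w0A]] := set_0Vmem A; first by rewrite big_set0.
have [w wA w_max] := arg_maxP x w0A.
pose A' := [set u in A | x u < x w].
have d_sum : \sum_(u in A) d u <= 0.
  rewrite -[leLHS](eq_bigl _ _ (fun u => andb_idr (@w_max u))); exact: d_lower.
have top_const u : u \in A -> x w <= x u -> c u = c w.
  move=> uA wu; apply/eqP; rewrite eq_le c_anti // c_anti //; exact: w_max.
have drop_top : \sum_(u in A) (c u - c w) * d u = \sum_(u in A') (c u - c w) * d u.
  rewrite (bigID (fun u => x u < x w)) /= [X in _ + X]big1 ?addr0.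
    by apply: eq_bigl => u; rewrite inE.
  by move=> u /andP [uA]; rewrite -leNgt => /(top_const u uA) ->; rewrite subrr mul0r.
have below_top : \sum_(u in A') (c u - c w) * d u <= 0.
  have A'A : A' \subset A by apply/subsetP => u; rewrite inE => /andP [].
  have /proper_card ltA'A : A' \proper A.
    by apply/properP; split=> //; exists w => //; rewrite inE ltxx andbF.
  apply: IH => [|u|u v|w'].
  - by rewrite ltnS in ltAn; exact: leq_trans ltA'A ltAn.
  - by rewrite inE => /andP [uA _]; rewrite subr_ge0 c_anti //; apply: w_max.
  - by rewrite !inE => /andP [uA _] /andP [vA _] xuv; rewrite lerD2r c_anti.
  rewrite inE => /andP [w'A w'w].
  rewrite (eq_bigl (fun u => (u \in A) && (x u <= x w'))) ?d_lower // => u.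
  rewrite inE -andbA; case: (x u <= x w') / idP => [uw'|]; last by rewrite !andbF.
  by rewrite (le_lt_trans uw' w'w).
have -> : \sum_(u in A) c u * d u =
    \sum_(u in A) (c u - c w) * d u + c w * \sum_(u in A) d u.
  by rewrite mulr_sumr -big_split; apply: eq_bigr => u _ /=; ring.
by rewrite drop_top ler_wnDl // mulr_ge0_le0 ?c_ge0.
Qed.

Lemma concave_majorization (R : realFieldType) (U : finType) (phi : R -> R)
    (x y : U -> R) :
  concave phi -> \sum_u y u = \sum_u x u ->
  (forall w, \sum_(u | x u <= x w) y u <= \sum_(u | x u <= x w) x u) ->
  \sum_u phi (y u) <= \sum_u phi (x u).
Proof.
move=> phi_cvx sum_eq y_lower.
have [w0 _|U0] := pickP (fun _ : U => true); last by rewrite !big_pred0.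
pose ts := [seq x u | u <- enum U] ++ [seq y u | u <- enum U].
have [C [tangent C_anti]] := concave_supergradients ts phi_cvx.
have x_ts u : x u \in ts by rewrite mem_cat map_f ?mem_enum.
have y_ts u : y u \in ts by rewrite mem_cat orbC map_f ?mem_enum.
have [wm _ wm_max] := arg_maxP x (isT : predT w0).
pose d u := y u - x u.
have linearized : \sum_u phi (y u) <= \sum_u phi (x u) + \sum_u C (x u) * d u.
  by rewrite -big_split; apply: ler_sum => u _; apply: tangent; apply: y_ts.
have d_sum0 : \sum_u d u = 0 by rewrite sumrB sum_eq subrr.
have shifted : \sum_u C (x u) * d u = \sum_u (C (x u) - C (x wm)) * d u.
  under [RHS]eq_bigr => u _ do rewrite mulrBl.
  by rewrite sumrB -mulr_sumr d_sum0 mulr0 subr0.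
have : \sum_u (C (x u) - C (x wm)) * d u <= 0.
  rewrite -(eq_bigl _ _ (@in_setT U)).
  apply: (abel_nonpos (x := x)) => [u _|u v _ _ xuv|w _].
  - by rewrite subr_ge0 C_anti ?x_ts //; apply: wm_max.
  - by rewrite lerD2r C_anti ?x_ts.
  under eq_bigl => u do rewrite in_setT.
  by rewrite /d sumrB subr_le0 y_lower.
lra.
Qed.

Lemma layer_cake (R : realFieldType) (f : nat -> R) (n p : nat) :
  (1 <= p <= n)%N ->
  f p = f n + \sum_(1 <= i < n) (if (p <= i)%N then f i - f i.+1 else 0).
Proof.
move=> /andP [p1 pn].
rewrite (@big_cat_nat _ _ _ p 1 n _ _ p1 pn) /= big_nat_cond big1 ?add0r; last first.
  by move=> i /andP [/andP [_ ip] _]; rewrite leqNgt ip.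
rewrite big_nat_cond (eq_bigr (fun i => f i - f i.+1)); last first.
  by move=> i /andP [/andP [-> _] _].
rewrite -big_nat_cond.
have -> : \sum_(p <= i < n) (f i - f i.+1) = - \sum_(p <= i < n) (f i.+1 - f i).
  by rewrite -sumrN; apply: eq_bigr => i _; rewrite opprB.
rewrite telescope_sumr //; lra.
Qed.

Section PrefixCounts.

Variable U : finType.
Implicit Types (A L : {set U}) (r s q : ranking U).

Definition top_count A r (j : nat) : nat := #|[set w in A | (r w < j)%N]|.

Definition prefix_dominates L q s : Prop :=
  forall j, (top_count L s j <= top_count L q j)%N.

Lemma ranking_onto r : injective r -> forall i : 'I_#|U|, exists w, r w = i.
Proof.
move=> r_inj i; have [r' rK r'K] := inj_card_bij r_inj (eq_leq (card_ord #|U|)).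
by exists (r' i).
Qed.

Lemma top_count_le_card A r j : (top_count A r j <= #|A|)%N.
Proof. by apply: subset_leq_card; apply/subsetP => w; rewrite inE => /andP []. Qed.

Lemma top_count_full A r j : (#|U| <= j)%N -> top_count A r j = #|A|.
Proof.
move=> Uj; rewrite /top_count; congr #|pred_of_set _|; apply/setP => w.
by rewrite inE (leq_trans (ltn_ord (r w)) Uj) andbT.
Qed.

Lemma top_count_succ A r v :
  injective r -> top_count A r (r v).+1 = ((v \in A) + top_count A r (r v))%N.
Proof.
move=> r_inj; rewrite /top_count (cardsD1 v) inE ltnSn andbT; congr (_ + #|pred_of_set _|)%N.
apply/setP => w; rewrite !inE ltnS leq_eqVlt.
case: (eqVneq w v) => [->|wv]; first by rewrite ltnn andbF.
by have /negbTE -> : nat_of_ord (r w) != r v by apply: contra wv => /eqP/val_inj/r_inj ->.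
Qed.

Lemma dominates_sum (R : realFieldType) (f : nat -> R) L q s :
  (forall i j : nat, (1 <= i)%N -> (i <= j)%N -> (j <= #|U|)%N -> f j <= f i) ->
  prefix_dominates L q s ->
  \sum_(w in L) f (rk s w) <= \sum_(w in L) f (rk q w).
Proof.
move=> f_anti dom.
pose d i := f i - f i.+1.
have layers r : \sum_(w in L) f (rk r w) =
    \sum_(w in L) f #|U| + \sum_(1 <= i < #|U|) d i * (top_count L r i)%:R.
  rewrite (eq_bigr (fun w => f #|U| +
      \sum_(1 <= i < #|U|) (if (rk r w <= i)%N then d i else 0))); last first.
    by move=> w _; apply: layer_cake; rewrite /rk ltn_ord.
  rewrite big_split /=; congr (_ + _).
  rewrite exchange_big /=; apply: eq_bigr => i _.
  rewrite -big_mkcondr /= sumr_const mulr_natr; congr (_ *+ _).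
  by apply: eq_card => w; rewrite !inE.
rewrite !layers lerD2l; apply: ler_sum_nat => i /andP [i1 iU].
by rewrite ler_wpM2l ?ler_nat // subr_ge0 f_anti // ltnW.
Qed.

Definition swap_rank r (u v : U) : ranking U := [ffun w => r (tperm u v w)].

Lemma swap_rankE r u v w : swap_rank r u v w = r (tperm u v w).
Proof. by rewrite ffunE. Qed.

Lemma swap_rank_inj r u v : injective r -> injective (swap_rank r u v).
Proof. by move=> r_inj w1 w2; rewrite !swap_rankE => /r_inj/perm_inj. Qed.

Lemma top_count_swap A r u v j : (r v < r u)%N ->
  (top_count A (swap_rank r u v) j <=
   top_count A r j + [&& u \in A, v \notin A & (r v < j <= r u)%N])%N.
Proof.
move=> vu; have vu' : v != u by apply: contraTneq vu => ->; rewrite ltnn.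
have split_uv (X : {set U}) : #|X| = ((u \in X) + (v \in X) + #|X :\ u :\ v|)%N.
  by rewrite (cardsD1 u) (cardsD1 v (X :\ u)) in_setD1 vu' addnA.
rewrite /top_count; set S' := [set w in A | _]; set S := [set w in A | _].
rewrite (split_uv S') (split_uv S).
have -> : S' :\ u :\ v = S :\ u :\ v.
  apply/setP => w; rewrite !inE swap_rankE.
  case: (eqVneq w v) => //= wv; case: (eqVneq w u) => //= wu.
  by rewrite tpermD // eq_sym.
rewrite !inE !swap_rankE tpermL tpermR.
have [uj|ju] := ltnP (r u) j; first rewrite (ltn_trans vu uj).
all: by case: (u \in A); case: (v \in A); case: (r v < j)%N => /=; lia.
Qed.

Lemma swap_rank_le L r u v w :
  v \notin L -> (r v < r u)%N -> w \in L -> (swap_rank r u v w <= r w)%N.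
Proof.
move=> vL vu wL; rewrite swap_rankE.
case: tpermP => [->|wv|//]; first exact: ltnW.
by move: wL vL; rewrite wv => ->.
Qed.

(* ... and it strictly decreases the total position of L, the measure that
   makes repeated exchanges terminate. *)
Lemma swap_rank_sum_lt L r u v :
  u \in L -> v \notin L -> (r v < r u)%N ->
  (\sum_(w in L) swap_rank r u v w < \sum_(w in L) r w)%N.
Proof.
move=> uL vL vu.
rewrite (bigD1 u uL) [X in (_ < X)%N](bigD1 u uL) /= swap_rankE tpermL -addSn.
apply: leq_add => //; apply: leq_sum => w /andP [wL _]; exact: (swap_rank_le vL vu wL).
Qed.

Lemma prefix_dominatesP L q s :
  reflect (prefix_dominates L q s)
          [forall j : 'I_#|U|.+1, top_count L s j <= top_count L q j]%N.
Proof.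
apply: (iffP forallP) => [dom j|dom j]; last exact: dom.
have [jU|Uj] := leqP j #|U|; first exact: (dom (Ordinal (jU : j < #|U|.+1)%N)).
by rewrite !top_count_full // ltnW.
Qed.

Lemma first_deficit L r s :
  injective r -> injective s ->
  (exists j, top_count L r j < top_count L s j)%N ->
  exists2 v, v \notin L & (top_count L r (r v).+1 < top_count L s (r v).+1)%N.
Proof.
move=> r_inj s_inj deficit.
case: (ex_minnP deficit) => -[|p] deficit_p p_min.
  have top0 q : top_count L q 0 = 0 by apply: eq_card0 => w; rewrite inE ltn0 andbF.
  by rewrite !top0 in deficit_p.
have [Up|pU] := leqP #|U| p.
  by move: deficit_p; rewrite top_count_full ?(leq_trans Up) // ltnNge top_count_le_card.
have [v rv] := ranking_onto r_inj (Ordinal pU).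
have [v' sv'] := ranking_onto s_inj (Ordinal pU).
have {rv}rv : nat_of_ord (r v) = p by rewrite rv.
have {sv'}sv' : nat_of_ord (s v') = p by rewrite sv'.
have no_deficit : (top_count L s p <= top_count L r p)%N.
  by rewrite leqNgt; apply/negP => /p_min; rewrite ltnn.
suff vL : v \notin L by exists v => //; rewrite rv.
apply: contraL deficit_p => vL; rewrite -leqNgt.
rewrite -{1}sv' top_count_succ // -rv top_count_succ // vL sv' rv.
by case: (v' \in L) => /=; lia.
Qed.

End PrefixCounts.

Section Feasibility.

Variables (U : finType) (t : nat) (grp : U -> 'I_t) (ub : nat -> 'I_t -> int).
Implicit Types (L : {set U}) (r s q : ranking U).

Definition group_set (k : 'I_t) : {set U} := [set w | grp w == k].

Lemma feasibleP r :
  feasible grp ub r <-> injective r /\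
    forall j k, (0 < j <= #|U|)%N -> (top_count (group_set k) r j)%:Z <= ub j k.
Proof.
have count_eq j k :
    #|[set u | (grp u == k) && (rk r u <= j)%N]| = top_count (group_set k) r j.
  by apply: eq_card => w; rewrite !inE.
split=> [/andP [/injectiveP r_inj /forallP r_ub]|[r_inj r_ub]].
  split=> // -[//|j] k /= jU; rewrite -count_eq.
  by have /forallP := r_ub (Ordinal jU); apply.
apply/andP; split; first exact/injectiveP.
by apply/forallP => i; apply/forallP => k; rewrite count_eq r_ub //= ltn_ord.
Qed.

Lemma swap_feasible r u v :
  feasible grp ub r -> (r v < r u)%N ->
  (forall j, (0 < j <= #|U|)%N -> (r v < j <= r u)%N -> grp v != grp u ->
     ((top_count (group_set (grp u)) r j).+1)%:Z <= ub j (grp u)) ->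
  feasible grp ub (swap_rank r u v).
Proof.
move=> /feasibleP [r_inj r_ub] vu room; apply/feasibleP.
split=> [|j k jU]; first exact: swap_rank_inj.
have := top_count_swap (group_set k) j vu.
case: and3P => [[uk vk jr]|_] count_le.
  rewrite !inE in uk vk; rewrite -(eqP uk) in vk count_le *.
  apply: le_trans (room j jU jr vk).
  by rewrite lez_nat -addn1.
by apply: le_trans (r_ub j k jU); rewrite lez_nat; rewrite addn0 in count_le.
Qed.

Lemma group_deficit (A B : {set U}) :
  (#|A| < #|B|)%N -> exists k, (#|A :&: group_set k| < #|B :&: group_set k|)%N.
Proof.
have by_groups (X : {set U}) : #|X| = (\sum_(k < t) #|X :&: group_set k|)%N.
  rewrite -sum1_card (partition_big grp xpredT) //=.
  by apply: eq_bigr => k _; rewrite -sum1_card; apply: eq_bigl => w; rewrite !inE.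
move=> AB; apply/existsP; apply: contraLR AB => /existsPn none.
by rewrite -leqNgt !by_groups; apply: leq_sum => k _; rewrite leqNgt none.
Qed.

(* Take the first deficient prefix (ending at
   v), a group k in deficit there, and its highest member u of L below the
   prefix: either an element of k outside L sits above u and trades places
   with it, or the upper bounds met by s leave room for u at every prefix
   between v and u. *)
Lemma exchange_step L r s :
  feasible grp ub r -> feasible grp ub s ->
  (exists j, top_count L r j < top_count L s j)%N ->
  exists u v,
    [/\ u \in L, v \notin L, (r v < r u)%N & feasible grp ub (swap_rank r u v)].
Proof.
move=> fr fs deficit.
have [r_inj _] := (feasibleP r).1 fr; have [s_inj s_ub] := (feasibleP s).1 fs.
have [v vL] := first_deficit r_inj s_inj deficit; rewrite /top_count.
set p := (r v).+1 => /group_deficit [k deficit_k].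
have [u0 u0_low] : exists u, [&& u \in L, grp u == k & (p <= r u)%N].
  apply/existsP; apply: contraLR deficit_k => /existsPn none_low; rewrite -leqNgt.
  apply: (@leq_trans #|L :&: group_set k|); apply: subset_leq_card; apply/subsetP => w.
    by rewrite !inE => /andP [/andP [-> _] ->].
  rewrite !inE => /andP [wL wk]; rewrite wL wk /= ltnNge.
  by have := none_low w; rewrite wL wk andbT.
have [u /and3P [uL /eqP uk pu] u_min] :=
  @arg_minnP _ u0 (fun u => [&& u \in L, grp u == k & (p <= r u)%N])
             (fun u => nat_of_ord (r u)) u0_low.
have vu : (r v < r u)%N := pu.
case: (boolP [exists w, [&& w \notin L, grp w == grp u & (r w < r u)%N]]).
  case/existsP => w /and3P [wL /eqP wu_grp wu].
  by exists u, w; split=> //; apply: swap_feasible => // j _ _; rewrite wu_grp eqxx.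
move=> /existsPn none_above; exists u, v; split=> //.
have in_prefix w : grp w = k -> (r w < r u)%N -> (w \in L) && (r w < p)%N.
  move=> wk wu; have wL : w \in L.
    by have := none_above w; rewrite uk wk eqxx wu !andbT negbK.
  rewrite wL ltnNge; apply/negP => pw.
  by have := u_min w; rewrite wL wk eqxx pw => /(_ isT); rewrite leqNgt wu.
apply: swap_feasible => // j jU /andP [vj ju] _; rewrite uk.
apply: le_trans (s_ub j k jU); rewrite lez_nat.
apply: leq_trans (leq_trans _ deficit_k) _; rewrite ?ltnS; apply: subset_leq_card.
  apply/subsetP => w; rewrite !inE => /andP [/eqP wk wj].
  by rewrite in_prefix ?(leq_trans wj ju) // wk eqxx.
apply/subsetP => w; rewrite !inE => /andP [/andP [_ swp] ->].
by rewrite (leq_trans swp vj).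
Qed.

Lemma exchange_closure L s r :
  feasible grp ub s -> feasible grp ub r ->
  exists q, [/\ feasible grp ub q, {in L, forall w, (q w <= r w)%N} &
                prefix_dominates L q s].
Proof.
move=> fs; elim: {r}_.+1 {-2}r (ltnSn (\sum_(w in L) r w)) => // N IH r ltN fr.
have [dom|/forallPn [j]] :=
  boolP [forall j : 'I_#|U|.+1, top_count L s j <= top_count L r j]%N.
  by exists r; split=> //; apply/prefix_dominatesP.
rewrite -ltnNge => deficit_j.
have [u [v [uL vL vu fr']]] := exchange_step fr fs (ex_intro _ (nat_of_ord j) deficit_j).
have [|q [fq q_le q_dom]] := IH (swap_rank r u v) _ fr'.
  by rewrite ltnS in ltN; exact: leq_trans (swap_rank_sum_lt uL vL vu) ltN.
exists q; split=> // w wL; exact: leq_trans (q_le w wL) (swap_rank_le vL vu wL).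
Qed.

End Feasibility.

Definition shift_mass (R : realFieldType) (U : finType) (F : {ffun ranking U -> R})
    (r q : ranking U) : {ffun ranking U -> R} :=
  [ffun s => F s + (if s == q then F r else 0) - (if s == r then F r else 0)].

Lemma sum_if_eq (R : realFieldType) (T : finType) (q : T) (a : R) :
  \sum_(s : T) (if s == q then a else 0) = a.
Proof. by rewrite -big_mkcond /= big_pred1_eq. Qed.

Lemma shift_mass_distr (R : realFieldType) (U : finType) (S : pred (ranking U))
    (F : {ffun ranking U -> R}) r q :
  distr_over S F -> S q -> distr_over S (shift_mass F r q).
Proof.
move=> [F_ge0 [F_sum1 F_supp]] Sq; split; [|split].
- move=> s; rewrite ffunE; have := F_ge0 s; have := F_ge0 r.
  by case: (eqVneq s r) => [->|_]; case: (eqVneq _ q) => _; lra.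
- under eq_bigr => s _ do rewrite ffunE -addrA.
  by rewrite big_split /= sumrB !sum_if_eq subrr addr0.
move=> s; rewrite ffunE.
case: (eqVneq s q) => [->//|_]; case: (eqVneq s r) => [->|_].
  by rewrite addr0 subrr eqxx.
by rewrite addr0 subr0 => /F_supp.
Qed.

Lemma shift_mass_expv (R : realFieldType) (U : finType) (f : nat -> R) (g : U -> R)
    (F : {ffun ranking U -> R}) r q w :
  expv f g (shift_mass F r q) w = expv f g F w + F r * (value f g q w - value f g r w).
Proof.
rewrite /expv (eq_bigr (fun s => F s * value f g s w +
   ((if s == q then F r * value f g q w else 0) -
    (if s == r then F r * value f g r w else 0)))).
  by rewrite big_split /= sumrB !sum_if_eq; ring.
move=> s _; rewrite ffunE.
by case: (eqVneq s q) => [->|_]; case: (eqVneq _ r) => [->|_]; ring.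
Qed.

Lemma sum_expv (R : realFieldType) (U : finType) (f : nat -> R) (g : U -> R)
    (D : {ffun ranking U -> R}) (A : {set U}) :
  \sum_(w in A) expv f g D w =
  \sum_s D s * (\sum_(w in A) f (rk s w)) - (\sum_s D s) * \sum_(w in A) g w.
Proof.
rewrite /expv exchange_big /= mulr_suml -sumrB; apply: eq_bigr => s _.
by rewrite !mulr_sumr -sumrB; apply: eq_bigr => w _; rewrite /value; ring.
Qed.

(* Over bijective rankings the total expected value is the same for every
   distribution: each position is occupied exactly once. *)
Lemma total_expv (R : realFieldType) (U : finType) (f : nat -> R) (g : U -> R)
    (S : pred (ranking U)) (D : {ffun ranking U -> R}) :
  (forall r, S r -> injective r) -> distr_over S D ->
  \sum_u expv f g D u = \sum_(i < #|U|) f i.+1 - \sum_u g u.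
Proof.
move=> S_inj [_ [D_sum1 D_supp]].
have setT_sum (h : U -> R) : \sum_(w in [set: U]) h w = \sum_w h w.
  by apply: eq_bigl => w; rewrite in_setT.
have := sum_expv f g D [set: U]; rewrite !setT_sum D_sum1 mul1r => ->.
congr (_ - _); rewrite -[RHS]mul1r -D_sum1 mulr_suml; apply: eq_bigr => s _.
have [->|Ds] := eqVneq (D s) 0; first by rewrite !mul0r.
have s_bij : bijective s by apply: inj_card_bij (S_inj s (D_supp s Ds)) _; rewrite card_ord.
by rewrite setT_sum (reindex s (onW_bij _ s_bij)).
Qed.

Section MaxminFairness.

Variables (R : realFieldType) (U : finType) (t : nat).
Variables (grp : U -> 'I_t) (ub : nat -> 'I_t -> int).
Variables (f : nat -> R) (g : U -> R) (F : {ffun ranking U -> R}).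
Hypothesis f_anti :
  forall i j : nat, (1 <= i)%N -> (i <= j)%N -> (j <= #|U|)%N -> f j <= f i.
Hypothesis F_distr : distr_over (feasible grp ub) F.
Hypothesis F_fair : maxmin_fair (feasible grp ub) f g F.

Definition lower_set (lam : R) : {set U} := [set u | expv f g F u <= lam].

(* Otherwise the exchange
   argument yields a feasible q, at least as good as r on all of L and
   strictly better for some u in L; moving F's mass from r to q raises u and
   lowers nobody in L, contradicting maxmin-fairness. *)
Lemma support_optimal lam r s :
  F r != 0 -> feasible grp ub s ->
  \sum_(w in lower_set lam) f (rk s w) <= \sum_(w in lower_set lam) f (rk r w).
Proof.
move=> Fr fs; set L := lower_set lam.
have [F_ge0 [_ F_supp]] := F_distr.
have Fr_pos : 0 < F r by rewrite lt_def Fr F_ge0.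
have [q [fq q_le q_dom]] := exchange_closure L fs (F_supp r Fr).
apply: le_trans (dominates_sum f_anti q_dom) _.
have q_better w : w \in L -> value f g r w <= value f g q w.
  by move=> wL; rewrite lerD2r f_anti // /rk ?ltnS ?q_le ?ltn_ord.
apply: ler_sum => u uL; rewrite leNgt; apply/negP => improved.
have raised : expv f g F u < expv f g (shift_mass F r q) u.
  by rewrite shift_mass_expv ltrDl mulr_gt0 // subr_gt0 ltrD2r.
have [v [v_lowered v_le]] := F_fair (shift_mass_distr r F_distr fq) raised.
have vL : v \in L by move: uL; rewrite !inE; apply: le_trans.
move: v_lowered; rewrite ltNge shift_mass_expv lerDl.
by rewrite mulr_ge0 ?(ltW Fr_pos) // subr_ge0 q_better.
Qed.

Lemma lower_set_sum lam D :
  distr_over (feasible grp ub) D ->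
  \sum_(w | expv f g F w <= lam) expv f g D w <=
  \sum_(w | expv f g F w <= lam) expv f g F w.
Proof.
move=> [D_ge0 [D_sum1 D_supp]]; have [F_ge0 [F_sum1 _]] := F_distr.
have in_lower h : \sum_(w | expv f g F w <= lam) h w = \sum_(w in lower_set lam) h w.
  by apply: eq_bigl => w; rewrite inE.
rewrite !in_lower !sum_expv D_sum1 F_sum1 lerD2r.
pose A s := \sum_(w in lower_set lam) f (rk s w).
have opt s : D s != 0 -> A s <= \sum_r F r * A r.
  move=> Ds; rewrite -[A s]mul1r -F_sum1 mulr_suml; apply: ler_sum => r _.
  have [->|Fr] := eqVneq (F r) 0; first by rewrite !mul0r.
  by rewrite ler_wpM2l //; apply: support_optimal => //; apply: D_supp.
rewrite -[leRHS]mul1r -D_sum1 mulr_suml; apply: ler_sum => s _.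
have [->|Ds] := eqVneq (D s) 0; first by rewrite !mul0r.
by apply: ler_wpM2l => //; exact: opt.
Qed.

End MaxminFairness.

Unset Implicit Arguments.

Theorem mainTheorem4 (R : realFieldType) (U : finType) (t : nat)
  (grp : U -> 'I_t) (ub : nat -> 'I_t -> int)
  (Rel : U -> R) (f : nat -> R) (g : U -> R) (phi : R -> R)
  (F : {ffun ranking U -> R}) :
  injective Rel ->
  (forall i j : nat, (1 <= i)%N -> (i <= j)%N -> (j <= #|U|)%N -> f j <= f i) ->
  (forall u v : U, Rel v <= Rel u -> g v <= g u) ->
  (exists r : ranking U, feasible grp ub r) ->
  concave phi ->
  distr_over (feasible grp ub) F ->
  maxmin_fair (feasible grp ub) f g F ->
  forall D : {ffun ranking U -> R}, distr_over (feasible grp ub) D ->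
    \sum_(u : U) phi (expv f g D u) <= \sum_(u : U) phi (expv f g F u).
Proof.
move=> _ f_anti _ _ phi_cvx F_distr F_fair D D_distr.
have feasible_inj r : feasible grp ub r -> injective r by case/feasibleP.
apply: concave_majorization => // [|w].
  by rewrite (total_expv _ _ feasible_inj D_distr) (total_expv _ _ feasible_inj F_distr).
exact: (lower_set_sum f_anti F_distr F_fair _ D_distr).
Qed.
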